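(* In the setting below, let $\mathfrak f=\mathrm{Im}\,\beta\subset\mathfrak g$, $\mathfrak f^\perp=\ker\beta\subset\mathfrak g^*$, and let $s:\mathfrak f\to\mathfrak g^*$ be a linear map with $\beta\circ s=\mathrm{id}_{\mathfrak f}$. Then $\mathfrak g\oplus i\mathfrak f$ is a real Lie subalgebra of $\hat{\mathfrak g}$, $\mathfrak f^\perp$ is a $(\mathfrak g\oplus i\mathfrak f)$-module under $(x+iy)\cdot a^*=\mathrm{ad}^*(x)a^*$, and for each sign the bilinear map $\tau_\pm(x_1+iy_1,x_2+iy_2)=\pm\big(\mathrm{ad}^*(x_1)s(y_2)-\mathrm{ad}^*(x_2)s(y_1)-s([x_1,y_2])+s([x_2,y_1])\big)$ ($x_j\in\mathfrak g$, $y_j\in\mathfrak f$) takes values in $\mathfrak f^\perp$ and is a $2$-cocycle of $\mathfrak g\oplus i\mathfrak f$ with values in $\mathfrak f^\perp$. Moreover $\mathcal D(\mathfrak g)\cong(\mathfrak g\oplus i\mathfrak f)\ltimes_{\tau_\pm}\mathfrak f^\perp$ as Lie algebras, via $(x+iy,a^* )\mapsto S_\pm(x+iy)+\iota(a^* )$, where $S_\pm(x+iy)=(x\mp\alpha(s(y)),\pm s(y))$ and $\iota(a^* )=(-\alpha(a^* ),a^* )$.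
   Context: Setting: $\mathfrak g$ is a finite-dimensional real Lie algebra and $r\in\mathfrak g\otimes\mathfrak g$ (identified with $r:\mathfrak g^*\to\mathfrak g$, $\langle r(a^* ),b^*\rangle=\langle a^*\otimes b^*,r\rangle$) is a solution of the type II CYBE $[r_{12},r_{13}]+[r_{12},r_{23}]+[r_{13},r_{23}]=\frac12[r_{13}+r_{31},r_{23}+r_{32}]$ (for $r=\sum a_i\otimes b_i$: $[r_{12},r_{13}]=\sum[a_i,a_j]\otimes b_i\otimes b_j$, $[r_{12},r_{23}]=\sum a_i\otimes[b_i,a_j]\otimes b_j$, $[r_{13},r_{23}]=\sum a_i\otimes a_j\otimes[b_i,b_j]$; with $r+\sigma(r)=\sum c_k\otimes d_k$, $[r_{13}+r_{31},r_{23}+r_{32}]=\sum c_k\otimes c_l\otimes[d_k,d_l]$), whose symmetric part $\beta=(r+r^t)/2$ is invariant ($(\mathrm{ad}(x)\otimes\mathrm{id}+\mathrm{id}\otimes\mathrm{ad}(x))\beta=0$); $\alpha=(r-r^t)/2$. Coadjoint action: $\langle\mathrm{ad}^*(x)a^*,y\rangle=-\langle a^*,[x,y]\rangle$. On $\mathfrak g^*$ set $[a^*,b^*]_\delta=\mathrm{ad}^*(\alpha(a^* ))b^*-\mathrm{ad}^*(\alpha(b^* ))a^*$ and for $a^*\in\mathfrak g^*,x\in\mathfrak g$ define $\mathrm{ad}^*(a^* )x\in\mathfrak g$ by $\langle\mathrm{ad}^*(a^* )x,b^*\rangle=-\langle x,[a^*,b^*]_\delta\rangle$. The Drinfeld double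 $\mathcal D(\mathfrak g)=\mathfrak g\oplus\mathfrak g^*$ has bracket $[(x,a^* ),(y,b^* )]=([x,y]+\mathrm{ad}^*(a^* )y-\mathrm{ad}^*(b^* )x,[a^*,b^*]_\delta+\mathrm{ad}^*(x)b^*-\mathrm{ad}^*(y)a^* )$. $\hat{\mathfrak g}=\mathfrak g\oplus i\mathfrak g$ is the complexification viewed as a real Lie algebra. For a Lie algebra $\mathfrak h$, an $\mathfrak h$-module $V$ and a 2-cocycle $\tau$, $\mathfrak h\ltimes_\tau V$ is $\mathfrak h\oplus V$ with bracket $[(X,u),(Y,v)]=([X,Y],X\cdot v-Y\cdot u+\tau(X,Y))$. *)

(* A finite-dimensional Lie algebra g over R is modelled as
   'rV[R]_n with a bracket; g^* is also 'rV[R]_n, paired with g via the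
   standard dual-basis pairing; tensors in g (x) g are n x n matrices. *)
From HB Require Import structures.
From mathcomp Require Import all_boot all_order all_algebra.
Set Implicit Arguments. Unset Strict Implicit. Unset Printing Implicit Defensive.
Import Order.TTheory GRing.Theory Num.Theory.
Local Open Scope ring_scope.

Definition ev {R : fieldType} {n : nat} (j : 'I_n) : 'rV[R]_n := delta_mx 0 j.

Definition dpair (R : fieldType) (n : nat) (a x : 'rV[R]_n) : R :=
  \sum_(i < n) a 0 i * x 0 i.

Definition is_lie_bracket (R : fieldType) (V : lmodType R) (br : V -> V -> V) : Prop :=
  (forall c x y z, br (c *: x + y) z = c *: br x z + br y z) /\
  (forall c x y z, br z (c *: x + y) = c *: br z x + br z y) /\
  (forall x, br x x = 0) /\
  (forall x y z, br x (br y z) + br y (br z x) + br z (br x y) = 0).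

Definition is_lie_subalgebra (R : fieldType) (V : lmodType R) (br : V -> V -> V)
  (P : V -> Prop) : Prop :=
  P 0 /\ (forall c x y, P x -> P y -> P (c *: x + y)) /\
  (forall x y, P x -> P y -> P (br x y)).

Definition is_lie_module (R : fieldType) (L W : lmodType R) (brL : L -> L -> L)
  (PL : L -> Prop) (PV : W -> Prop) (act : L -> W -> W) : Prop :=
  (forall X a, PL X -> PV a -> PV (act X a)) /\
  (forall c X Y a, PL X -> PL Y -> PV a -> act (c *: X + Y) a = c *: act X a + act Y a) /\
  (forall c X a b, PL X -> PV a -> PV b -> act X (c *: a + b) = c *: act X a + act X b) /\
  (forall X Y a, PL X -> PL Y -> PV a ->
     act (brL X Y) a = act X (act Y a) - act Y (act X a)).

Definition is_2cocycle (R : fieldType) (L W : lmodType R) (brL : L -> L -> L)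
  (PL : L -> Prop) (PV : W -> Prop) (act : L -> W -> W) (tau : L -> L -> W) : Prop :=
  (forall X Y, PL X -> PL Y -> PV (tau X Y)) /\
  (forall c X Y Z, PL X -> PL Y -> PL Z -> tau (c *: X + Y) Z = c *: tau X Z + tau Y Z) /\
  (forall c X Y Z, PL X -> PL Y -> PL Z -> tau Z (c *: X + Y) = c *: tau Z X + tau Z Y) /\
  (forall X, PL X -> tau X X = 0) /\
  (forall X Y Z, PL X -> PL Y -> PL Z ->
     act X (tau Y Z) + act Y (tau Z X) + act Z (tau X Y)
     = tau (brL X Y) Z + tau (brL Y Z) X + tau (brL Z X) Y).

Definition sd_bracket (R : fieldType) (L W : lmodType R) (brL : L -> L -> L)
  (act : L -> W -> W) (tau : L -> L -> W) (p q : L * W) : L * W :=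
  (brL p.1 q.1, act p.1 q.2 - act q.1 p.2 + tau p.1 q.1).

Definition is_lie_iso (R : fieldType) (A B : lmodType R) (P : A -> Prop)
  (brA : A -> A -> A) (brB : B -> B -> B) (phi : A -> B) : Prop :=
  (forall c x y, P x -> P y -> phi (c *: x + y) = c *: phi x + phi y) /\
  (forall x y, P x -> P y -> phi (brA x y) = brB (phi x) (phi y)) /\
  (forall x y, P x -> P y -> phi x = phi y -> x = y) /\
  (forall z, exists x, P x /\ phi x = z).

Section Coords.
Variables (R : fieldType) (n : nat) (br : 'rV[R]_n -> 'rV[R]_n -> 'rV[R]_n).

(* type II CYBE for r (r i j = coefficient of e_i (x) e_j), componentwise *)
Definition cybe2 (r : 'M[R]_n) : Prop :=
  forall k l m : 'I_n,
    \sum_(p < n) \sum_(p' < n) r p l * r p' m * br (ev p) (ev p') 0 k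
  + \sum_(q < n) \sum_(p' < n) r k q * r p' m * br (ev q) (ev p') 0 l
  + \sum_(q < n) \sum_(q' < n) r k q * r l q' * br (ev q) (ev q') 0 m
  = 2^-1 * \sum_(q < n) \sum_(q' < n)
       (r + r^T) k q * (r + r^T) l q' * br (ev q) (ev q') 0 m.

(* invariance of a symmetric tensor b : (ad x (x) id + id (x) ad x) b = 0 *)
Definition ad_invariant (b : 'M[R]_n) : Prop :=
  forall (x : 'rV[R]_n) (k l : 'I_n),
    \sum_(p < n) b p l * br x (ev p) 0 k + \sum_(q < n) b k q * br x (ev q) 0 l = 0.

Definition sym_part (r : 'M[R]_n) : 'M[R]_n := 2^-1 *: (r + r^T).
Definition skew_part (r : 'M[R]_n) : 'M[R]_n := 2^-1 *: (r - r^T).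

Definition coad (x a : 'rV[R]_n) : 'rV[R]_n := \row_j - dpair a (br x (ev j)).

(* bracket [a*, b*]_delta on g^*, with al = alpha as a matrix *)
Definition dbr (al : 'M[R]_n) (a b : 'rV[R]_n) : 'rV[R]_n :=
  coad (a *m al) b - coad (b *m al) a.

Definition coad_dual (al : 'M[R]_n) (a x : 'rV[R]_n) : 'rV[R]_n :=
  \row_j - dpair (dbr al a (ev j)) x.

Definition double_br (al : 'M[R]_n) (p q : 'rV[R]_n * 'rV[R]_n) : 'rV[R]_n * 'rV[R]_n :=
  (br p.1 q.1 + coad_dual al p.2 q.1 - coad_dual al q.2 p.1,
   dbr al p.2 q.2 + coad p.1 q.2 - coad q.1 p.2).

(* bracket of the complexification g (+) i g (pair (x,y) = x + i y) *)
Definition cplx_br (p q : 'rV[R]_n * 'rV[R]_n) : 'rV[R]_n * 'rV[R]_n :=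
  (br p.1 q.1 - br p.2 q.2, br p.1 q.2 + br p.2 q.1).

Definition tau_pm (eps : R) (s : 'rV[R]_n -> 'rV[R]_n) (X Y : 'rV[R]_n * 'rV[R]_n)
  : 'rV[R]_n :=
  eps *: (coad X.1 (s Y.2) - coad Y.1 (s X.2) - s (br X.1 Y.2) + s (br Y.1 X.2)).

Definition Phi_pm (eps : R) (s : 'rV[R]_n -> 'rV[R]_n) (al : 'M[R]_n)
  (p : ('rV[R]_n * 'rV[R]_n) * 'rV[R]_n) : 'rV[R]_n * 'rV[R]_n :=
  ((p.1.1 - eps *: (s p.1.2 *m al)) + (- (p.2 *m al)), eps *: s p.1.2 + p.2).

End Coords.

From HB Require Import structures.
From mathcomp Require Import all_boot all_order all_algebra ring.
Set Implicit Arguments. Unset Strict Implicit. Unset Printing Implicit Defensive.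
Import Order.TTheory GRing.Theory Num.Theory.
Local Open Scope ring_scope.

(* The shear (x, a) |-> (x - alpha a, a) of g (+) g^* conjugates the bracket of the Drinfeld
   double to ((x1, a1), (x2, a2)) |-> ([x1, x2] - [beta a1, beta a2], ad^*(x1) a2 - ad^*(x2) a1);
   the type II CYBE enters only here, as the modified CYBE
   [alpha a, alpha b] - alpha [a, b]_delta = [beta a, beta b] of the skew part.
   Invariance makes beta a g-module map, so f = Im beta is an ideal and f^perp = ker beta is
   annihilated by f; hence (y, a) |-> eps s(y) + a is a bijection f x f^perp -> g^*, and the
   isomorphism is the shear composed with (x + iy, a) |-> (x, eps s(y) + a).  tau_eps measures the
   failure of s to intertwine brackets; by Jacobi its cocycle identity reduces to the cyclic
   identity ad^*([y1, y2]) s(y3) + cyclic = 0 on f, again a consequence of invariance. *)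

Section Pairing.
Variables (R : fieldType) (n : nat).
Local Notation V := 'rV[R]_n.

Lemma dpairC (a x : V) : dpair a x = dpair x a.
Proof. by apply: eq_bigr => i _; rewrite mulrC. Qed.

Lemma dpairDl (a b x : V) : dpair (a + b) x = dpair a x + dpair b x.
Proof. by rewrite /dpair -big_split; apply: eq_bigr => i _; rewrite mxE mulrDl. Qed.

Lemma dpairZl c (a x : V) : dpair (c *: a) x = c * dpair a x.
Proof. by rewrite /dpair mulr_sumr; apply: eq_bigr => i _; rewrite mxE mulrA. Qed.

Lemma dpairNl (a x : V) : dpair (- a) x = - dpair a x.
Proof. by rewrite -scaleN1r dpairZl mulN1r. Qed.

Lemma dpair0l (x : V) : dpair 0 x = 0.
Proof. by rewrite -(scale0r 0) dpairZl mul0r. Qed.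

Lemma dpairDr (a b x : V) : dpair x (a + b) = dpair x a + dpair x b.
Proof. by rewrite !(dpairC x) dpairDl. Qed.

Lemma dpairZr c (a x : V) : dpair x (c *: a) = c * dpair x a.
Proof. by rewrite !(dpairC x) dpairZl. Qed.

Lemma dpairNr (a x : V) : dpair x (- a) = - dpair x a.
Proof. by rewrite !(dpairC x) dpairNl. Qed.

Lemma dpair0r (x : V) : dpair x 0 = 0.
Proof. by rewrite dpairC dpair0l. Qed.

Lemma dpair_evl j (x : V) : dpair (ev j) x = x 0 j.
Proof.
rewrite /dpair (bigD1 j) //= big1 ?addr0 => [|i ij]; rewrite /ev mxE eqxx.
  by rewrite eqxx mul1r.
by rewrite (negbTE ij) mul0r.
Qed.

Lemma dpair_evr j (x : V) : dpair x (ev j) = x 0 j.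
Proof. by rewrite dpairC dpair_evl. Qed.

Lemma row_dpair_eqr (u v : V) : (forall a, dpair a u = dpair a v) -> u = v.
Proof. by move=> uv; apply/rowP => j; rewrite -!dpair_evl uv. Qed.

Lemma row_dpair_eql (u v : V) : (forall x, dpair u x = dpair v x) -> u = v.
Proof. by move=> uv; apply/rowP => j; rewrite -!dpair_evr uv. Qed.

Lemma dpair_mulmx (c w : V) (M : 'M[R]_n) : dpair c (w *m M) = dpair w (c *m M^T).
Proof.
rewrite /dpair; under eq_bigr => i _ do rewrite mxE mulr_sumr.
under [RHS]eq_bigr => i _ do rewrite mxE mulr_sumr.
rewrite exchange_big; apply: eq_bigr => i _; apply: eq_bigr => j _.
by rewrite mxE mulrCA mulrA.
Qed.

Lemma ev_mulmx j (M : 'M[R]_n) k : (ev j *m M) 0 k = M j k.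
Proof. by rewrite /ev -rowE mxE. Qed.

Lemma linear_row_expand (f : V -> V) : linear f ->
  forall u, f u = \sum_(j < n) u 0 j *: f (ev j).
Proof.
move=> f_lin u; rewrite {1}(row_sum_delta u).
elim/big_rec2: _ => [|j s1 s2 _ <-]; last by rewrite f_lin.
by rewrite -(subrr (0 : V)) (zmod_morphism_linear f_lin) !subrr.
Qed.

Lemma scalar_row_expand (f : V -> R) : scalar f ->
  forall u, f u = \sum_(j < n) u 0 j * f (ev j).
Proof.
move=> f_lin u; rewrite {1}(row_sum_delta u).
elim/big_rec2: _ => [|j s1 s2 _ <-]; last by rewrite f_lin.
by rewrite -(subrr (0 : V)) (zmod_morphism_linear f_lin) !subrr.
Qed.

Lemma bilinear_eq0 (F : V -> V -> R) :
  (forall b, scalar (F^~ b)) -> (forall a, scalar (F a)) ->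
  (forall i j, F (ev i) (ev j) = 0) -> forall a b, F a b = 0.
Proof.
move=> F1 F2 F0 a b; rewrite (scalar_row_expand (F1 b)) big1 // => i _.
by rewrite (scalar_row_expand (F2 _)) big1 ?mulr0 // => j _; rewrite F0 mulr0.
Qed.

Lemma trilinear_eq0 (F : V -> V -> V -> R) :
  (forall b c, scalar (fun a => F a b c)) -> (forall a c, scalar (fun b => F a b c)) ->
  (forall a b, scalar (F a b)) ->
  (forall i j k, F (ev i) (ev j) (ev k) = 0) -> forall a b c, F a b c = 0.
Proof.
move=> F1 F2 F3 F0 a b c; apply: (bilinear_eq0 (F := fun a b => F a b c)) => // i j.
by rewrite (scalar_row_expand (F3 _ _)) big1 // => k _; rewrite F0 mulr0.
Qed.

End Pairing.

Section LieAlgebra.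
Variables (R : fieldType) (n : nat) (br : 'rV[R]_n -> 'rV[R]_n -> 'rV[R]_n).
Hypothesis br_lie : is_lie_bracket br.
Local Notation V := 'rV[R]_n.
Local Notation coad := (coad br).

Lemma brDZl c x y z : br (c *: x + y) z = c *: br x z + br y z.
Proof. by case: br_lie. Qed.

Lemma brDZr c x y z : br z (c *: x + y) = c *: br z x + br z y.
Proof. by case: br_lie => _ []. Qed.

Lemma brxx x : br x x = 0.
Proof. by case: br_lie => _ [_ []]. Qed.

Lemma jacobi x y z : br x (br y z) + br y (br z x) + br z (br x y) = 0.
Proof. by case: br_lie => _ [_ [_]]. Qed.

Lemma br0l z : br 0 z = 0.
Proof. by have := brDZl (-1) 0 0 z; rewrite scaler0 add0r scaleN1r => ->; rewrite addNr. Qed.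

Lemma br0r z : br z 0 = 0.
Proof. by have := brDZr (-1) 0 0 z; rewrite scaler0 add0r scaleN1r => ->; rewrite addNr. Qed.

Lemma brDl x y z : br (x + y) z = br x z + br y z.
Proof. by rewrite -(scale1r x) brDZl !scale1r. Qed.

Lemma brDr x y z : br z (x + y) = br z x + br z y.
Proof. by rewrite -(scale1r x) brDZr !scale1r. Qed.

Lemma brZl c x z : br (c *: x) z = c *: br x z.
Proof. by rewrite -(addr0 (c *: x)) brDZl br0l addr0. Qed.

Lemma brZr c x z : br z (c *: x) = c *: br z x.
Proof. by rewrite -(addr0 (c *: x)) brDZr br0r addr0. Qed.

Lemma brNl x z : br (- x) z = - br x z.
Proof. by rewrite -scaleN1r brZl scaleN1r. Qed.

Lemma brNr x z : br z (- x) = - br z x.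
Proof. by rewrite -scaleN1r brZr scaleN1r. Qed.

Lemma br_skew x y : br x y = - br y x.
Proof.
have := brxx (x + y); rewrite brDl !brDr !brxx add0r addr0 => /eqP.
by rewrite addr_eq0 => /eqP.
Qed.

Lemma jacobi_brl a b c : br (br a b) c = br a (br b c) + br b (br c a).
Proof. by have := jacobi a b c; rewrite (br_skew c (br a b)) => /eqP; rewrite subr_eq0 => /eqP ->. Qed.

Lemma jacobi_cycle a b c : br (br a b) c = - br (br b c) a - br (br c a) b.
Proof.
have := jacobi c a b; rewrite (br_skew c (br a b)) (br_skew a (br b c)) (br_skew b (br c a)).
by rewrite -!opprD => /eqP; rewrite oppr_eq0 -addrA addr_eq0 opprD => /eqP.
Qed.

Lemma br_coordr x (v : V) k : br x v 0 k = \sum_(p < n) v 0 p * br x (ev p) 0 k.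
Proof.
have brx_lin : linear (br x) by move=> c u w; rewrite brDZr.
by rewrite (linear_row_expand brx_lin v) summxE; apply: eq_bigr => p _; rewrite mxE.
Qed.

Lemma br_coord (u v : V) k :
  br u v 0 k = \sum_(p < n) \sum_(q < n) u 0 p * v 0 q * br (ev p) (ev q) 0 k.
Proof.
have brv_lin : linear (br^~ v) by move=> c u' w; rewrite brDZl.
rewrite (linear_row_expand brv_lin u) summxE; apply: eq_bigr => p _.
by rewrite mxE br_coordr mulr_sumr; apply: eq_bigr => q _; rewrite mulrA.
Qed.

Lemma dpair_coadl x (a y : V) : dpair (coad x a) y = - dpair a (br x y).
Proof.
have brx_lin : scalar (fun y => dpair a (br x y)).
  by move=> c u v; rewrite brDZr dpairDr dpairZr.
rewrite (scalar_row_expand brx_lin y) /dpair -sumrN; apply: eq_bigr => i _.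
by rewrite mxE mulrC mulrN.
Qed.

Lemma coadDl x x' (a : V) : coad (x + x') a = coad x a + coad x' a.
Proof. by apply: row_dpair_eql => y; rewrite dpairDl !dpair_coadl brDl dpairDr opprD. Qed.

Lemma coadZl c x (a : V) : coad (c *: x) a = c *: coad x a.
Proof. by apply: row_dpair_eql => y; rewrite dpairZl !dpair_coadl brZl dpairZr mulrN. Qed.

Lemma coadNl x (a : V) : coad (- x) a = - coad x a.
Proof. by rewrite -scaleN1r coadZl scaleN1r. Qed.

Lemma coad0l (a : V) : coad 0 a = 0.
Proof. by apply: row_dpair_eql => y; rewrite dpair_coadl br0l dpair0r dpair0l oppr0. Qed.

Lemma coadDr x (a b : V) : coad x (a + b) = coad x a + coad x b.
Proof. by apply: row_dpair_eql => y; rewrite dpairDl !dpair_coadl dpairDl opprD. Qed.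

Lemma coadZr c x (a : V) : coad x (c *: a) = c *: coad x a.
Proof. by apply: row_dpair_eql => y; rewrite dpairZl !dpair_coadl dpairZl mulrN. Qed.

Lemma coadNr x (a : V) : coad x (- a) = - coad x a.
Proof. by rewrite -scaleN1r coadZr scaleN1r. Qed.

Lemma coad0r x : coad x 0 = 0.
Proof. by apply: row_dpair_eql => y; rewrite dpair_coadl !dpair0l oppr0. Qed.

Ltac expand := repeat progress rewrite -?scalemxAl ?(dpairDl, dpairDr, dpairZl, dpairZr,
  dpairNl, dpairNr, dpair0l, dpair0r, brDl, brDr, brZl, brZr, brNl, brNr, br0l, br0r,
  dpair_coadl, coadDl, coadDr, coadZl, coadZr, coadNl, coadNr, coad0l, coad0r,
  mulmxDl, mulNmx, mul0mx).

Lemma coad_br x y (a : V) : coad (br x y) a = coad x (coad y a) - coad y (coad x a).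
Proof.
by apply: row_dpair_eql => z; expand; rewrite jacobi_brl (br_skew z x); expand; ring.
Qed.


(* Proves a ring identity that is [C] or its negative after normalization. *)
Ltac ring_using C := match type of C with ?A = ?B =>
  apply/eqP; rewrite -subr_eq0; apply/eqP;
  first [ transitivity (A - B); [ring | by rewrite C subrr]
        | transitivity (B - A); [ring | by rewrite C subrr] ] end.

Lemma dpair_coad_dualr (al : 'M[R]_n) a x b :
  dpair b (coad_dual br al a x) = - dpair (dbr br al a b) x.
Proof.
have dbr_lin : scalar (fun b => dpair (dbr br al a b) x).
  by move=> k u v; rewrite /dbr; expand; ring.
rewrite (scalar_row_expand dbr_lin b) /dpair -sumrN; apply: eq_bigr => i _.
by rewrite mxE mulrN.
Qed.

Definition shear (al : 'M[R]_n) (p : V * V) : V * V := (p.1 - p.2 *m al, p.2).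

Section SkewPart.
Variable r : 'M[R]_n.
Hypothesis two_neq0 : 2 != 0 :> R.
Hypothesis r_cybe : cybe2 br r.
Hypothesis beta_inv : ad_invariant br (sym_part r).
Local Notation be := (sym_part r).
Local Notation al := (skew_part r).

Lemma sym_part_tr : be^T = be.
Proof. by apply/matrixP => i j; rewrite !mxE addrC. Qed.

Lemma skew_part_tr : al^T = - al.
Proof. by apply/matrixP => i j; rewrite !mxE; ring. Qed.

Lemma skew_add_sym : r = al + be.
Proof. by apply/matrixP => i j; rewrite !mxE; field. Qed.

Lemma mulmx_rE (u : V) : u *m r = u *m al + u *m be.
Proof. by rewrite {1}skew_add_sym mulmxDr. Qed.

Lemma mulmx_rTE (u : V) : u *m r^T = u *m be - u *m al.
Proof. by rewrite {1}skew_add_sym linearD /= skew_part_tr sym_part_tr mulmxDr mulmxN addrC. Qed.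

Lemma mulmx_r_rTE (u : V) : u *m (r + r^T) = 2 *: (u *m be).
Proof. by rewrite scalemxAr /sym_part scalerA mulfV // scale1r. Qed.

Lemma dpair_sym c w : dpair c (w *m be) = dpair w (c *m be).
Proof. by rewrite dpair_mulmx sym_part_tr. Qed.

Lemma dpair_skew c w : dpair c (w *m al) = - dpair w (c *m al).
Proof. by rewrite dpair_mulmx skew_part_tr mulmxN dpairNr. Qed.

Lemma dpair_br_sym x a b : dpair b (br x (a *m be)) = - dpair a (br x (b *m be)).
Proof.
apply/eqP; rewrite -addr_eq0; apply/eqP; move: a b.
apply: bilinear_eq0 => [b c u v|a c u v|l k]; try by expand; ring.
rewrite !dpair_evl !br_coordr -[RHS](beta_inv x k l); congr (_ + _).
  by apply: eq_bigr => p _; rewrite ev_mulmx -{1}sym_part_tr mxE.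
by apply: eq_bigr => p _; rewrite ev_mulmx.
Qed.

Lemma coad_sym x a : coad x a *m be = br x (a *m be).
Proof. by apply: row_dpair_eqr => c; rewrite dpair_sym dpair_coadl dpair_br_sym opprK. Qed.

Lemma dpair_brl_sym a b y z :
  dpair b (br (br (a *m be) y) z) = dpair a (br y (br z (b *m be))).
Proof.
rewrite br_skew (br_skew _ y) brNr opprK -coad_sym dpair_br_sym.
by rewrite dpair_coadl opprK.
Qed.

Lemma sym_ideal x y : (y <= be)%MS -> (br x y <= be)%MS.
Proof. by case/submxP => a ->; rewrite -coad_sym submxMl. Qed.

Lemma sym_ideal_l x y : (y <= be)%MS -> (br y x <= be)%MS.
Proof. by move=> fy; rewrite br_skew -scaleN1r scalemx_sub // sym_ideal. Qed.

Lemma dpair_perp a y : a *m be = 0 -> (y <= be)%MS -> dpair a y = 0.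
Proof. by move=> a0 /submxP [c ->]; rewrite dpair_sym a0 dpair0r. Qed.

Lemma coad_perp a y : a *m be = 0 -> (y <= be)%MS -> coad y a = 0.
Proof.
move=> a0 fy; apply: row_dpair_eql => z.
by rewrite dpair_coadl dpair0l (dpair_perp a0) ?oppr0 // sym_ideal_l.
Qed.

Lemma cybe2_dpair a b c :
  dpair c (br (a *m r^T) (b *m r^T)) + dpair a (br (c *m r) (b *m r^T))
  + dpair b (br (c *m r) (a *m r))
  = 2^-1 * dpair b (br (c *m (r + r^T)) (a *m (r + r^T))).
Proof.
apply/eqP; rewrite -subr_eq0; apply/eqP; move: c a b.
apply: trilinear_eq0 => [a b u v w|c b u v w|c a u v w|k l m]; try by expand; ring.
rewrite !dpair_evl !br_coord -[RHS](subrr (2^-1 * \sum_(q < n) \sum_(q' < n)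
       (r + r^T) k q * (r + r^T) l q' * br (ev q) (ev q') 0 m)).
rewrite -{1}(r_cybe k l m); congr (_ + _ + _ - _).
- by apply: eq_bigr => p _; apply: eq_bigr => q _; rewrite !ev_mulmx !mxE.
- by apply: eq_bigr => p _; apply: eq_bigr => q _; rewrite !ev_mulmx !mxE.
- by apply: eq_bigr => p _; apply: eq_bigr => q _; rewrite !ev_mulmx.
- by congr (_ * _); apply: eq_bigr => p _; apply: eq_bigr => q _; rewrite !ev_mulmx.
Qed.

Lemma skew_part_mcybe a b :
  br (a *m al) (b *m al) = br (a *m be) (b *m be) + dbr br al a b *m al.
Proof.
apply: row_dpair_eqr => c.
have C := cybe2_dpair a b c.
rewrite !mulmx_r_rTE !mulmx_rE !mulmx_rTE in C; move: C; expand => C.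
rewrite mulKf // in C.
(* Invariance of [be] turns the terms of [C] into those of the goal. *)
rewrite (dpair_br_sym (c *m be) b a) in C.
rewrite (br_skew (c *m be) (a *m be)) dpairNr (dpair_br_sym (a *m be) c b) in C.
rewrite (dpair_br_sym (a *m al) b c) in C.
rewrite (br_skew (c *m be) (a *m al)) dpairNr in C.
rewrite (br_skew (a *m be) (b *m al)) dpairNr (dpair_br_sym (b *m al) a c) in C.
rewrite (br_skew (c *m be) (b *m al)) dpairNr in C.
rewrite (dpair_br_sym (c *m al) b a) in C.
rewrite /dbr; expand; rewrite (dpair_skew c (coad _ b)) (dpair_skew c (coad _ a)); expand.
rewrite (br_skew (a *m al) (c *m al)) (br_skew (b *m al) (c *m al)); expand.
ring_using C.
Qed.

Lemma coad_dualE a x : coad_dual br al a x = br (a *m al) x + coad x a *m al.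
Proof.
apply: row_dpair_eqr => b; rewrite dpair_coad_dualr /dbr; expand.
by rewrite dpair_skew; expand; rewrite (br_skew x (b *m al)); expand; ring.
Qed.

Lemma double_br_shear p q :
  double_br br al (shear al p) (shear al q)
  = shear al (br p.1 q.1 - br (p.2 *m be) (q.2 *m be), coad p.1 q.2 - coad q.1 p.2).
Proof.
case: p q => [x1 u1] [x2 u2]; rewrite /double_br /shear /= !coad_dualE /dbr.
congr pair; last by apply: row_dpair_eql => y; expand; ring.
apply: row_dpair_eqr => c; expand.
by rewrite (br_skew (u2 *m al) x1) (br_skew (u2 *m al) (u1 *m al)) skew_part_mcybe /dbr; expand; ring.
Qed.

Section Splitting.
Variables (s : V -> V) (eps : R).
Hypothesis s_linear : forall c (y1 y2 : V), (y1 <= be)%MS -> (y2 <= be)%MS ->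
  s (c *: y1 + y2) = c *: s y1 + s y2.
Hypothesis s_section : forall y : V, (y <= be)%MS -> s y *m be = y.
Hypothesis eps_sign : eps = 1 \/ eps = -1.

Lemma eps_sqr : eps * eps = 1.
Proof. by case: eps_sign => ->; rewrite ?mulrNN mulr1. Qed.

(* A linear extension of [s] to all of [g]: [v *m pinvmx be *m be] is a linear retraction onto [f]. *)
Definition sbar (v : V) : V := s (v *m pinvmx be *m be).

Lemma sbarDZ c u v : sbar (c *: u + v) = c *: sbar u + sbar v.
Proof. by rewrite /sbar !mulmxDl -!scalemxAl s_linear // submxMl. Qed.

Lemma sbarD u v : sbar (u + v) = sbar u + sbar v.
Proof. by rewrite -(scale1r u) sbarDZ !scale1r. Qed.

Lemma sbar0 : sbar 0 = 0.
Proof. by have := sbarDZ (-1) 0 0; rewrite scaler0 add0r scaleN1r addNr. Qed.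

Lemma sbarZ c u : sbar (c *: u) = c *: sbar u.
Proof. by rewrite -(addr0 (c *: u)) sbarDZ sbar0 addr0. Qed.

Lemma sbarN u : sbar (- u) = - sbar u.
Proof. by rewrite -scaleN1r sbarZ scaleN1r. Qed.

Lemma sbarE y : (y <= be)%MS -> s y = sbar y.
Proof. by move=> fy; rewrite /sbar mulmxKpV. Qed.

Lemma sbar_section y : (y <= be)%MS -> sbar y *m be = y.
Proof. by move=> fy; rewrite -sbarE // s_section. Qed.

Lemma section_add_perp y a : (y <= be)%MS -> a *m be = 0 -> (eps *: s y + a) *m be = eps *: y.
Proof. by move=> fy a0; rewrite mulmxDl a0 addr0 -scalemxAl s_section. Qed.

Ltac in_f := first [ assumption | apply: sub0mx | apply: submxMl
  | apply: addmx_sub; in_f | apply: scalemx_sub; in_f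
  | apply: sym_ideal; in_f | apply: sym_ideal_l; in_f ].

Ltac to_sbar := rewrite ?sbarE; try by in_f.

Ltac expand_s := repeat progress (rewrite ?(sbarD, sbarZ, sbarN, sbar0); expand).

Lemma cplx_subalgebra : is_lie_subalgebra (cplx_br br) (fun X : V * V => (X.2 <= be)%MS).
Proof. by split; [exact: sub0mx | split => [c|] X Y /= fX fY; in_f]. Qed.

Lemma perp_module : is_lie_module (cplx_br br) (fun X : V * V => (X.2 <= be)%MS)
  (fun a : V => a *m be = 0) (fun (X : V * V) (a : V) => coad X.1 a).
Proof.
split; first by move=> X a _ a0 /=; rewrite coad_sym a0 br0r.
split; first by move=> c X Y a _ _ _ /=; rewrite coadDl coadZl.
split; first by move=> c X a b _ _ _ /=; rewrite coadDr coadZr.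
move=> [x1 y1] [x2 y2] a /= f1 f2 a0.
by rewrite coadDl coadNl (@coad_perp a (br y1 y2) a0) ?oppr0 ?addr0 ?coad_br //; in_f.
Qed.

Lemma coad_sbar_cycle y1 y2 y3 : (y1 <= be)%MS -> (y2 <= be)%MS -> (y3 <= be)%MS ->
  coad (br y1 y2) (sbar y3) = - coad (br y2 y3) (sbar y1) - coad (br y3 y1) (sbar y2).
Proof.
move=> f1 f2 f3; apply: row_dpair_eql => z; expand.
have E3 : dpair (sbar y3) (br (br y1 y2) z) = dpair (sbar y1) (br y2 (br z y3)).
  by rewrite -{1}(sbar_section f1) dpair_brl_sym (sbar_section f3).
have E2 : dpair (sbar y2) (br (br y3 y1) z) = - dpair (sbar y1) (br y3 (br z y2)).
  by rewrite (br_skew y3 y1) brNl dpairNr -{1}(sbar_section f1) dpair_brl_sym (sbar_section f2).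
by rewrite E3 E2 (jacobi_brl y2 y3 z) (br_skew z y3); expand; ring.
Qed.

Lemma tau_cocycle : is_2cocycle (cplx_br br) (fun X : V * V => (X.2 <= be)%MS)
  (fun a : V => a *m be = 0) (fun (X : V * V) (a : V) => coad X.1 a) (tau_pm br eps s).
Proof.
split.
  move=> [x1 y1] [x2 y2] /= f1 f2; rewrite /tau_pm /= -scalemxAl; to_sbar.
  rewrite !mulmxDl !mulNmx !coad_sym !sbar_section; try by in_f.
  by apply: row_dpair_eqr => w; expand; ring.
split.
  move=> c [x1 y1] [x2 y2] [x3 y3] /= f1 f2 f3; rewrite /tau_pm /=; to_sbar.
  by apply: row_dpair_eqr => w; expand_s; ring.
split.
  move=> c [x1 y1] [x2 y2] [x3 y3] /= f1 f2 f3; rewrite /tau_pm /=; to_sbar.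
  by apply: row_dpair_eqr => w; expand_s; ring.
split.
  by move=> [x1 y1] /= f1; rewrite /tau_pm /= subrr sub0r addNr scaler0.
move=> [x1 y1] [x2 y2] [x3 y3] /= f1 f2 f3; rewrite /tau_pm /=; to_sbar.
rewrite !brDl !brNl (jacobi_brl x1 x2 y3) (jacobi_brl x2 x3 y1) (jacobi_brl x3 x1 y2).
rewrite (jacobi_cycle y1 y2 y3) !coadDl !coadNl (coad_sbar_cycle f1 f2 f3).
apply: row_dpair_eql => z; expand_s.
rewrite (jacobi_brl x1 x2 z) (jacobi_brl x2 x3 z) (jacobi_brl x3 x1 z).
rewrite (br_skew z x1) (br_skew z x2) (br_skew z x3).
rewrite (br_skew y1 x2) (br_skew y2 x3) (br_skew y3 x1).
by expand_s; ring.
Qed.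

Lemma Phi_pm_shear X a : Phi_pm eps s al (X, a) = shear al (X.1, eps *: s X.2 + a).
Proof. by rewrite /Phi_pm /shear /= mulmxDl -scalemxAl opprD addrA. Qed.

Lemma Phi_pm_iso : is_lie_iso
  (fun p : (V * V) * V => (p.1.2 <= be)%MS /\ p.2 *m be = 0)
  (sd_bracket (cplx_br br) (fun (X : V * V) (a : V) => coad X.1 a) (tau_pm br eps s))
  (double_br br al) (Phi_pm eps s al).
Proof.
split.
  move=> c [[x1 y1] a1] [[x2 y2] a2] /= [f1 _] [f2 _].
  rewrite !Phi_pm_shear /shear /= s_linear //; congr pair.
    by apply: row_dpair_eqr => w; expand; ring.
  by apply: row_dpair_eqr => w; expand; ring.
split.
  move=> [[x1 y1] a1] [[x2 y2] a2] /= [f1 p1] [f2 p2].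
  rewrite /sd_bracket /cplx_br /= !Phi_pm_shear double_br_shear /=.
  rewrite !section_add_perp // brZl brZr scalerA eps_sqr scale1r.
  congr (shear _ (_, _)); rewrite /tau_pm /=; to_sbar.
  rewrite (br_skew y1 x2); apply: row_dpair_eql => w; by expand_s; ring.
split.
  move=> [[x1 y1] a1] [[x2 y2] a2] /= [f1 p1] [f2 p2].
  rewrite !Phi_pm_shear /shear /= => -[e1 e2].
  have y12 : y1 = y2.
    move: (congr1 (mulmx^~ be) e2); rewrite /= !section_add_perp //.
    by move/(congr1 ( *:%R eps)); rewrite !scalerA eps_sqr !scale1r.
  subst y2; have a12 : a1 = a2 by apply: (addrI (eps *: s y1)).
  by subst a2; move/addIr: e1 => ->.
move=> [u b]; exists ((u + b *m al, eps *: (b *m be)), b - eps *: s (eps *: (b *m be))).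
have fy : (eps *: (b *m be) <= be)%MS by in_f.
split; first split => //=.
  by rewrite mulmxBl -scalemxAl s_section // scalerA eps_sqr scale1r subrr.
by rewrite Phi_pm_shear /shear /= addrCA subrr addr0 addrK.
Qed.

End Splitting.
End SkewPart.
End LieAlgebra.

Theorem theorem3p20 (R : realFieldType) (n : nat)
  (br : 'rV[R]_n -> 'rV[R]_n -> 'rV[R]_n) (r : 'M[R]_n)
  (s : 'rV[R]_n -> 'rV[R]_n) (eps : R) :
  is_lie_bracket br ->
  cybe2 br r ->
  ad_invariant br (sym_part r) ->
  (* s : f -> g^* linear, f = Im beta *)
  (forall c (y1 y2 : 'rV[R]_n), (y1 <= sym_part r)%MS -> (y2 <= sym_part r)%MS ->
     s (c *: y1 + y2) = c *: s y1 + s y2) ->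
  (* beta o s = id_f *)
  (forall y : 'rV[R]_n, (y <= sym_part r)%MS -> s y *m sym_part r = y) ->
  (eps = 1 \/ eps = -1) ->
  let beta := sym_part r in
  let alpha := skew_part r in
  let inL := fun X : 'rV[R]_n * 'rV[R]_n => (X.2 <= beta)%MS in
  let inFperp := fun a : 'rV[R]_n => a *m beta = 0 in
  let act := fun (X : 'rV[R]_n * 'rV[R]_n) (a : 'rV[R]_n) => coad br X.1 a in
  let tau := tau_pm br eps s in
  is_lie_subalgebra (cplx_br br) inL /\
  is_lie_module (cplx_br br) inL inFperp act /\
  is_2cocycle (cplx_br br) inL inFperp act tau /\
  is_lie_iso (fun p : ('rV[R]_n * 'rV[R]_n) * 'rV[R]_n => inL p.1 /\ inFperp p.2)
    (sd_bracket (cplx_br br) act tau) (double_br br alpha) (Phi_pm eps s alpha).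
Proof.
move=> br_lie r_cybe beta_inv s_linear s_section eps_sign /=.
have two_neq0 : 2 != 0 :> R by rewrite pnatr_eq0.
split; first exact: cplx_subalgebra.
split; first exact: perp_module.
split; first exact: tau_cocycle.
exact: Phi_pm_iso.
Qed.
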